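(* Let $L$ be a free abelian group of rank $n$ and take $A=\mathbb{C}$. The pro-bundle $\mathcal{L}\mathrm{og}^\infty$ admits a unique continuous multiplicative trivialization $\varrho_{\mathrm{cont}}$ on $T$. The section $\varrho_{\mathrm{cont}}$ is $C^\infty$, is compatible with multiplication by $N$, and satisfies $\nabla(\varrho_{\mathrm{cont}})=-\kappa\,\varrho_{\mathrm{cont}}$. In particular $\varrho_{\mathrm{cont}}|_{T^{\mathrm{tors}}}=\varrho_{\mathrm{can}}$.
   Context: $R$ is the completion of $\mathbb{C}[L]$ (basis $\delta_\ell$) at its augmentation ideal $I$, identified with $\widehat{\mathrm{Sym}}\,L_{\mathbb{C}}$ via $\delta_\ell\mapsto\sum_k\ell^k/k!$. $V=\mathbb{R}\otimes L$, $T=V/L$. The logarithm sheaf $\mathcal{L}\mathrm{og}$ is the local system on $T$ whose sections over $U$ are the locally constant $f:\pi^{-1}(U)\to R$ with $f(v+\ell)=\delta_\ell^{-1}f(v)$. $\mathcal{L}\mathrm{og}^\infty$ is the inverse system of $C^\infty$ vector bundles associated to the local systems $\mathcal{L}\mathrm{og}/I^{k+1}\mathcal{L}\mathrm{og}$, with flat connection $\nabla$. With $x_1,\dots,x_n$ the coordinates dual to a basis $\ell_1,\dots,\ell_n$ of $L$, $\kappa=\sum_jdx_j\otimes\ell_j$ is an $R$-valued 1-form on $T$, independent of the basis. There is a unique isomorphism $\mathrm{pr}_1^*\mathcal{L}\mathrm{og}\otimes_{\underline R}\mathrm{pr}_2^*\mathcal{L}\mathrm{og}\cong+^*\mathcal{L}\mathrm{og}$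 sending $1\otimes1\mapsto1$ at the origin. A multiplicative trivialization over a subgroup $H\subset T$ is a family of generators $1_h\in\mathcal{L}\mathrm{og}_h$ ($h\in H$) with $1_h\equiv1\bmod I$ and $1_h\otimes1_{h'}\mapsto1_{h+h'}$; it is continuous on $T$ if $t\mapsto1_t$ is a continuous section of each $\mathcal{L}\mathrm{og}/I^{k+1}\mathcal{L}\mathrm{og}$. Compatibility with multiplication by $N$ means that the map $\mathcal{L}\mathrm{og}\to[N]^*\mathcal{L}\mathrm{og}$ induced by $\delta_\ell\mapsto\delta_{N\ell}$ sends $1_t$ to $1_{Nt}$. $T^{\mathrm{tors}}$ is the torsion subgroup of $T$, and $\varrho_{\mathrm{can}}$ is the unique multiplicative trivialization of $\mathcal{L}\mathrm{og}$ over $T^{\mathrm{tors}}$. *)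

From mathcomp Require Import all_boot all_order all_algebra.
From mathcomp Require Import all_classical all_reals all_analysis.
From mathcomp Require Import complex.
Import Order.TTheory GRing.Theory Num.Theory.
Import numFieldNormedType.Exports.

Set Implicit Arguments.
Unset Strict Implicit.
Unset Printing Implicit Defensive.

Local Open Scope ring_scope.

Section Log.
Variables (R : realType) (n : nat).

(* L = Z^n (basis l_1..l_n), V = R (x) L = R^n (row vectors),
   coordinates x_j(v) = v 0 j. *)
Definition latv (z : 'rV[int]_n) : 'rV[R]_n := map_mx (fun k : int => k%:~R) z.

(* R = completion of C[L] at I, identified with the completed symmetric
   algebra of L_C = C[[l_1,...,l_n]]: an element is its family of
   coefficients indexed by multi-indices m (monomial l_1^{m_1}...l_n^{m_n}). *)
Definition mindex := 'I_n -> nat.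
Definition ps := mindex -> R[i].

Definition mdeg (m : mindex) : nat := (\sum_(i < n) m i)%N.
Definition mzero : mindex := fun _ => 0%N.

Definition psmul (f g : ps) : ps := fun m =>
  \sum_(a : {ffun 'I_n -> 'I_(mdeg m).+1} | [forall i, (a i <= m i)%N])
     f (fun i => nat_of_ord (a i)) * g (fun i => (m i - a i)%N).

Definition psopp (f : ps) : ps := fun m => - f m.

Definition psgen (j : 'I_n) : ps := fun m =>
  if [forall i, m i == (i == j)%N :> nat] then 1 else 0.

(* image of delta_l (l = sum_j z_j l_j) : sum_k l^k/k! = exp(l) *)
Definition delta (z : 'rV[int]_n) : ps := fun m =>
  \prod_(i < n) (((z 0 i)%:~R : R[i]) ^+ m i / ((m i)`!)%:R).

(* the ring endomorphism of R induced by delta_l |-> delta_{N l}; under the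
   identification with completed Sym L_C it is l |-> N l, i.e. it multiplies
   the homogeneous component of degree d by N^d. *)
Definition mulN (N : nat) (f : ps) : ps := fun m => ((N ^ mdeg m)%N)%:R * f m.

(* A multiplicative trivialization over the subgroup H of T = V/L, where H
   is given through its preimage P = pi^{-1}(H) in V.  An element of the
   fibre Log_t is a function f on the coset pi^{-1}(t) with
   f(v + l) = delta_l^{-1} f(v); the family (1_h)_{h in H} is thus a single
   function F on pi^{-1}(H) with this equivariance.  The isomorphism
   pr1^*Log (x) pr2^*Log = +^*Log is (f (x) g)(v + w) = f(v) g(w). *)
Definition mult_triv (P : set 'rV[R]_n) (F : 'rV[R]_n -> ps) : Prop :=
  [/\ (forall v z, P v -> F (v + latv z) = psmul (delta (- z)) (F v)),
      (forall v, P v -> F v mzero = 1) &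
      (forall v w, P v -> P w -> F (v + w) = psmul (F v) (F w))].

Definition ccont (f : 'rV[R]_n -> R[i]) : Prop :=
  continuous (fun v => complex.Re (f v)) /\ continuous (fun v => complex.Im (f v)).

(* t |-> 1_t is a continuous section of each Log/I^{k+1}: each coefficient
   (of degree <= k, for every k) is a continuous function on V. *)
Definition cont_triv (F : 'rV[R]_n -> ps) : Prop :=
  forall m, ccont (fun v => F v m).

Fixpoint iterD (ds : seq 'rV[R]_n) (f : 'rV[R]_n -> R) : 'rV[R]_n -> R :=
  match ds with
  | [::] => f
  | d :: ds' => fun v => 'D_d (iterD ds' f) v
  end.

Definition smoothR (f : 'rV[R]_n -> R) : Prop :=
  forall ds : seq 'rV[R]_n,
    continuous (iterD ds f) /\ forall d v, derivable (iterD ds f) v d.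

Definition smooth_triv (F : 'rV[R]_n -> ps) : Prop :=
  forall m, smoothR (fun v => complex.Re (F v m)) /\ smoothR (fun v => complex.Im (F v m)).

Definition ebasis (j : 'I_n) : 'rV[R]_n := delta_mx 0 j.

(* nabla F = - kappa F with kappa = sum_j dx_j (x) l_j:
   d/dx_j F = - l_j F for every j (componentwise in each coefficient). *)
Definition nabla_eq (F : 'rV[R]_n -> ps) : Prop :=
  forall (j : 'I_n) (v : 'rV[R]_n) (m : mindex),
    let G := psopp (psmul (psgen j) (F v)) in
    is_derive v (ebasis j) (fun w => complex.Re (F w m)) (complex.Re (G m)) /\
    is_derive v (ebasis j) (fun w => complex.Im (F w m)) (complex.Im (G m)).

(* preimage of the torsion subgroup T^tors: Q (x) L *)
Definition tors_pre : set 'rV[R]_n :=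
  fun v => exists (k : nat) (z : 'rV[int]_n), (0 < k)%N /\ k%:R *: v = latv z.

End Log.

(* The continuous trivialization is rho(v) = exp (- sum_j x_j(v) l_j): its
   coefficients are polynomials in v, hence smooth, it is multiplicative by the
   binomial theorem, and d/dx_j rho = - l_j rho.  For uniqueness, compare two
   multiplicative trivializations coefficient by coefficient, by induction on
   the degree: once the lower coefficients agree, the difference of the
   degree-m coefficients is additive and L-periodic, so it vanishes at every v
   with k v in L.  These torsion points are dense, and continuity concludes. *)

From Pilot Require Import Defs.
From mathcomp Require Import all_boot all_order all_algebra.
From mathcomp Require Import all_classical all_reals all_analysis.
From mathcomp Require Import complex ring.
Import Order.TTheory GRing.Theory Num.Theory.
Import numFieldNormedType.Exports.

Set Implicit Arguments.
Unset Strict Implicit.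
Unset Printing Implicit Defensive.

Local Open Scope ring_scope.

Section ContinuousTrivialization.
Variables (R : realType) (n : nat).
Local Notation V := 'rV[R]_n.
Local Notation mz := (@Defs.mzero n).

Inductive polyfun : (V -> R) -> Prop :=
| polyfunC c : polyfun (fun _ => c)
| polyfun_coord i : polyfun (fun v => v 0 i)
| polyfunD f g : polyfun f -> polyfun g -> polyfun (fun v => f v + g v)
| polyfunM f g : polyfun f -> polyfun g -> polyfun (fun v => f v * g v).

Lemma coord_is_derive (i : 'I_n) (v d : V) :
  is_derive v d (fun w : V => w 0 i) (d 0 i).
Proof.
have @f : {linear V -> R}.
  by exists (fun w : V => w 0 i); do 2![eexists]; do ?[constructor];
     rewrite ?mxE// => ? *; rewrite ?mxE//; move=> ?; rewrite !mxE.
have -> : (fun w : V => w 0 i) = f by [].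
have fc : continuous f by exact: coord_continuous.
apply: DeriveDef; first exact/diff_derivable/linear_differentiable.
by rewrite deriveE ?diff_lin //; exact: linear_differentiable.
Qed.

Lemma polyfun_derive f : polyfun f -> continuous f /\
  forall d, (forall v, derivable f v d) /\ polyfun (fun v => 'D_d f v).
Proof.
elim=> {f} [c|i|f g _ [cf Df] _ [cg Dg]|f g Pf [cf Df] Pg [cg Dg]].
- split=> [|d]; first exact: cst_continuous.
  split=> [v|]; first exact: derivable_cst.
  under eq_fun do rewrite derive_cst.
  exact: polyfunC.
- split=> [|d]; first exact: coord_continuous.
  split=> [v|]; first by case: (coord_is_derive i v d).
  under eq_fun => v do rewrite (derive_val (is_derive := coord_is_derive i v d)).
  exact: polyfunC.
- split=> [x|d]; first exact: continuousD (cf x) (cg x).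
  have [f'd Pf'] := Df d; have [g'd Pg'] := Dg d.
  split=> [v|]; first exact: derivableD.
  under eq_fun do rewrite deriveD //.
  exact: polyfunD.
- split=> [x|d]; first exact: continuousM (cf x) (cg x).
  have [f'd Pf'] := Df d; have [g'd Pg'] := Dg d.
  split=> [v|]; first exact: derivableM.
  under eq_fun => v do rewrite (deriveM (f'd v) (g'd v)).
  exact: polyfunD (polyfunM _ _) (polyfunM _ _).
Qed.

Lemma polyfunX f k : polyfun f -> polyfun (fun v => f v ^+ k).
Proof.
move=> Pf; elim: k => [|k IHk].
  by under eq_fun do rewrite expr0; exact: polyfunC.
by under eq_fun do rewrite exprS; exact: polyfunM.
Qed.

Lemma polyfun_prod (r : seq 'I_n) (g : 'I_n -> V -> R) :
  (forall i, polyfun (g i)) -> polyfun (fun v => \prod_(i <- r) g i v).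
Proof.
move=> Pg; elim: r => [|a r IHr].
  by under eq_fun do rewrite big_nil; exact: polyfunC.
by under eq_fun do rewrite big_cons; exact: polyfunM.
Qed.

Lemma polyfun_smooth f : polyfun f -> smoothR f.
Proof.
move=> Pf ds.
have /polyfun_derive [cf Df] : polyfun (Defs.iterD ds f).
  by elim: ds => [|d ds IHds] //=; case: (polyfun_derive IHds) => _ /(_ d) [].
by split=> // d v; case: (Df d).
Qed.

(* [rho v] is exp (- sum_j x_j(v) l_j) in the completed symmetric algebra;
   [rho_coef v m] is its (real) coefficient of the monomial l^m. *)
Definition rho_coef (v : V) (m : mindex n) : R :=
  \prod_(i < n) ((- v 0 i) ^+ m i / ((m i)`!)%:R).

Definition rho (v : V) : ps R n := fun m => real_complex R (rho_coef v m).

Lemma polyfun_rho_coef m : polyfun (fun v => rho_coef v m).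
Proof.
apply: polyfun_prod => i; apply: polyfunM (polyfunC _).
apply: polyfunX; under eq_fun do rewrite -mulN1r.
exact: polyfunM (polyfunC _) (polyfun_coord i).
Qed.

Lemma rho_smooth : smooth_triv rho.
Proof.
by move=> m; split; [exact/polyfun_smooth/polyfun_rho_coef |
                     exact/polyfun_smooth/polyfunC].
Qed.

Lemma rho_continuous : cont_triv rho.
Proof.
move=> m; split; last exact: cst_continuous.
by case: (polyfun_derive (polyfun_rho_coef m)).
Qed.

Lemma leq_mdeg (m : mindex n) i : (m i <= mdeg m)%N.
Proof. by rewrite /mdeg (bigD1 i) //= leq_addr. Qed.

Lemma natr_fact_neq0 k : (k`!)%:R != 0 :> R.
Proof. by rewrite pnatr_eq0 -lt0n fact_gt0. Qed.

Lemma exp_coefD (x y : R) N : (x + y) ^+ N / (N`!)%:R =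
  \sum_(k < N.+1) (y ^+ k / (k`!)%:R) * (x ^+ (N - k) / ((N - k)`!)%:R).
Proof.
rewrite exprDn mulr_suml; apply: eq_bigr => k _.
have kN : (k <= N)%N by rewrite -ltnS.
rewrite -(bin_fact kN) !natrM -mulr_natr.
have := natr_fact_neq0 k; have := natr_fact_neq0 (N - k).
have : ('C(N, k))%:R != 0 :> R by rewrite pnatr_eq0 -lt0n bin_gt0.
by move=> h1 h2 h3; field; rewrite h1 h2 h3.
Qed.

Lemma rho_coefD (v w : V) (m : mindex n) :
  rho_coef (v + w) m =
  \sum_(a : {ffun 'I_n -> 'I_(mdeg m).+1} | [forall i, (a i <= m i)%N])
     rho_coef v (fun i => a i) * rho_coef w (fun i => m i - a i)%N.
Proof.
rewrite /rho_coef.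
under eq_bigr => i _ do rewrite mxE opprD addrC exp_coefD
  (big_ord_widen (mdeg m).+1 (fun k => (- v 0 i) ^+ k / (k`!)%:R *
     ((- w 0 i) ^+ (m i - k) / ((m i - k)`!)%:R))
     (leq_mdeg m i : (m i).+1 <= (mdeg m).+1)%N).
rewrite bigA_distr_big_dep; apply: eq_big => [a|a _]; last by rewrite -big_split.
by apply/familyP/forallP => le_am i; have := le_am i.
Qed.

Lemma rhoD (v w : V) : rho (v + w) = psmul (rho v) (rho w).
Proof.
apply: funext => m; rewrite /rho rho_coefD rmorph_sum.
by apply: eq_bigr => a _; rewrite rmorphM.
Qed.

Lemma rho_mzero (v : V) : rho v mz = 1.
Proof.
rewrite /rho /rho_coef big1 ?rmorph1 // => i _.
by rewrite expr0 fact0 invr1 mulr1.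
Qed.

Lemma rho_latv z : rho (latv R z) = Defs.delta R (- z).
Proof.
apply: funext => m; rewrite /rho /rho_coef rmorph_prod; apply: eq_bigr => i _.
by rewrite rmorphM fmorphV rmorphXn rmorphN !mxE rmorph_int rmorph_nat intrN.
Qed.

Lemma rho_mult_triv : mult_triv setT rho.
Proof.
split=> [v z _|v _|v w _ _]; [|exact: rho_mzero|exact: rhoD].
by rewrite addrC rhoD rho_latv.
Qed.

Lemma rho_mulN (N : nat) (v : V) : rho (N%:R *: v) = mulN N (rho v).
Proof.
apply: funext => m; rewrite /mulN /rho -(rmorph_nat (real_complex R)) -rmorphM.
congr (real_complex R _); rewrite /rho_coef /mdeg natrX -prodrXr -big_split /=.
by apply: eq_bigr => i _; rewrite !mxE -mulrN exprMn mulrA.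
Qed.

Lemma is_derive_coordNX (i : 'I_n) (k : nat) (c : R) (v d : V) :
  is_derive v d (fun w : V => (- w 0 i) ^+ k * c)
    (k%:R * (- v 0 i) ^+ k.-1 * - d 0 i * c).
Proof.
have := is_deriveX k (is_deriveN (coord_is_derive i v d)).
rewrite exprfctE => /is_deriveM /(_ (is_derive_cst c v d)) /is_derive_eq; apply.
by rewrite scaler0 add0r /GRing.scale /= mulrC.
Qed.

Lemma is_derive0_prod (r : seq 'I_n) (P : pred 'I_n) (g : 'I_n -> V -> R)
    (v d : V) :
  (forall i, P i -> is_derive v d (g i) 0) ->
  is_derive v d (fun w => \prod_(i <- r | P i) g i w) 0.
Proof.
move=> g'0; elim: r => [|a r IHr].
  by under eq_fun do rewrite big_nil; exact: is_derive_cst.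
case Pa: (P a); last by under eq_fun do rewrite big_cons Pa.
under eq_fun do rewrite big_cons Pa.
apply: is_derive_eq (is_deriveM (g'0 a Pa) IHr) _.
by rewrite !scaler0 addr0.
Qed.

Lemma rho_coef_is_derive (v : V) j m :
  is_derive v (ebasis R j) (fun w => rho_coef w m)
    (- (if (0 < m j)%N then rho_coef v (fun i => m i - (i == j))%N else 0)).
Proof.
set d := ebasis R j.
pose g i (w : V) := (- w 0 i) ^+ m i * ((m i)`!%:R)^-1.
have -> : (fun w => rho_coef w m) =
    g j * (fun w => \prod_(i < n | i != j) g i w).
  by apply: funext => w; rewrite /rho_coef (bigD1 j).
have others'0 : is_derive v d (fun w => \prod_(i < n | i != j) g i w) 0.
  apply: is_derive0_prod => i ij.
  apply: is_derive_eq (is_derive_coordNX i (m i) _ v d) _.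
  by rewrite /d /ebasis mxE (negbTE ij) andbF oppr0 mulr0 mul0r.
apply: is_derive_eq (is_deriveM (is_derive_coordNX j (m j) _ v d) others'0) _.
rewrite /d /ebasis mxE !eqxx scaler0 add0r /GRing.scale /=.
case Emj: (m j) => [|k] /=; first by rewrite !mul0r mulr0 oppr0.
rewrite /rho_coef [in RHS](bigD1 j) //= eqxx Emj subn1 /=.
under [in RHS]eq_bigr => i ij do rewrite (negbTE ij) subn0.
rewrite factS natrM.
have := natr_fact_neq0 k; have : (k.+1)%:R != 0 :> R by rewrite pnatr_eq0.
by move=> h1 h2; field; rewrite h2 addrC natr1 h1.
Qed.

Lemma psmul_psgen (j : 'I_n) (Y : ps R n) (m : mindex n) :
  psmul (psgen R j) Y m =
  if (0 < m j)%N then Y (fun i => m i - (i == j))%N else 0.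
Proof.
rewrite /psmul /psgen; case: ifP => mj; last first.
  apply: big1 => a /forallP le_am.
  case: ifP => [/forallP a_j|_]; last by rewrite mul0r.
  by have := le_am j; rewrite (eqP (a_j j)) eqxx mj.
pose aj : {ffun 'I_n -> 'I_(mdeg m).+1} := [ffun i => inord (i == j)].
have ajE i : nat_of_ord (aj i) = (i == j) :> nat.
  rewrite ffunE inordK // ltnS (leq_trans _ (leq_mdeg m j)) //.
  by case: (i == j).
rewrite (bigD1 aj) /=; last by apply/forallP => i; rewrite ajE; case: eqP => [->|].
rewrite ifT; last by apply/forallP => i; rewrite ajE.
rewrite big1 ?addr0 ?mul1r; first by congr Y; apply: funext => i; rewrite ajE.
move=> a /andP [_ a_neq]; case: ifP => [/forallP a_j|_]; last by rewrite mul0r.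
case/eqP: a_neq; apply/ffunP => i; apply/val_inj.
by rewrite /= ajE; apply/eqP; exact: a_j.
Qed.

Lemma rho_nabla : nabla_eq rho.
Proof.
move=> j v m /=; rewrite /psopp psmul_psgen.
have -> : - (if (0 < m j)%N then rho v (fun i => m i - (i == j))%N else 0) =
  real_complex R (- (if (0 < m j)%N then rho_coef v (fun i => m i - (i == j))%N
                     else 0)).
  by rewrite rmorphN; case: ifP; rewrite ?rmorph0.
by split; [exact: rho_coef_is_derive | exact: is_derive_cst].
Qed.

Definition ff_bot (m : mindex n) : {ffun 'I_n -> 'I_(mdeg m).+1} :=
  [ffun _ => ord0].
Definition ff_top (m : mindex n) : {ffun 'I_n -> 'I_(mdeg m).+1} :=
  [ffun i => inord (m i)].

Lemma ff_topE m i : ff_top m i = m i :> nat.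
Proof. by rewrite ffunE inordK // ltnS leq_mdeg. Qed.

Lemma mdeg_eq0 (m : mindex n) : mdeg m = 0%N -> forall i, m i = 0%N.
Proof. by move=> m0 i; apply/eqP; rewrite -leqn0 -m0 leq_mdeg. Qed.

Lemma mdegB (m a : mindex n) : (forall i, a i <= m i)%N ->
  (mdeg (fun i => m i - a i) + mdeg a = mdeg m)%N.
Proof.
move=> le_am; rewrite /mdeg -big_split.
by apply: eq_bigr => i _ /=; rewrite subnK.
Qed.

Lemma mdeg_inner m (a : {ffun 'I_n -> 'I_(mdeg m).+1}) :
  ([forall i, (a i <= m i)%N] && (a != ff_bot m)) && (a != ff_top m) ->
  (mdeg (fun i => a i) < mdeg m)%N /\ (mdeg (fun i => m i - a i) < mdeg m)%N.
Proof.
move=> /andP [/andP [/forallP le_am a_bot] a_top].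
pose b : mindex n := fun i => a i.
have b_gt0 : (0 < mdeg b)%N.
  rewrite lt0n; apply/eqP => /mdeg_eq0 b0; case/eqP: a_bot.
  by apply/ffunP => i; apply/val_inj; rewrite ffunE /= -[val _]/(b i) b0.
have mb_gt0 : (0 < mdeg (fun i => m i - b i))%N.
  rewrite lt0n; apply/eqP => /mdeg_eq0 mb0; case/eqP: a_top.
  apply/ffunP => i; apply/val_inj/eqP.
  by rewrite /= ff_topE eqn_leq le_am -subn_eq0 mb0.
have /eq_leq le_sum := mdegB (a := b) le_am; split.
  by apply: leq_trans le_sum; rewrite -[X in (X < _)%N]add0n ltn_add2r.
by apply: leq_trans le_sum; rewrite -[X in (X < _)%N]addn0 ltn_add2l.
Qed.

Lemma psmul_split (X Y : ps R n) m : (0 < mdeg m)%N ->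
  psmul X Y m = X mz * Y m + X m * Y mz +
   \sum_(a : {ffun 'I_n -> 'I_(mdeg m).+1} |
            ([forall i, (a i <= m i)%N] && (a != ff_bot m)) && (a != ff_top m))
      X (fun i => a i) * Y (fun i => m i - a i)%N.
Proof.
move=> m_gt0; rewrite /psmul (bigD1 (ff_bot m)) /=; last first.
  by apply/forallP => i; rewrite ffunE.
rewrite (bigD1 (ff_top m)) /=; last first.
  apply/andP; split; first by apply/forallP => i; rewrite ff_topE.
  apply: contra_neq (lt0n_neq0 m_gt0) => top_bot; rewrite /mdeg big1 // => i _.
  by rewrite -(ff_topE m i) top_bot ffunE.
rewrite addrA; congr (X _ * Y _ + X _ * Y _ + _); apply: funext => i;
  by rewrite ?ff_topE ?ffunE /= ?subn0 ?subnn.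
Qed.

(* Once the lower coefficients agree, the inner terms of [psmul_split] cancel. *)
Lemma psmulB (X X' Y Y' : ps R n) m : (0 < mdeg m)%N ->
  X mz = 1 -> X' mz = 1 -> Y mz = 1 -> Y' mz = 1 ->
  (forall a, (mdeg a < mdeg m)%N -> X a = X' a /\ Y a = Y' a) ->
  psmul X Y m - psmul X' Y' m = (X m - X' m) + (Y m - Y' m).
Proof.
move=> m_gt0 X0 X'0 Y0 Y'0 low_eq; rewrite !psmul_split // X0 X'0 Y0 Y'0.
rewrite (eq_bigr (fun a : {ffun 'I_n -> 'I_(mdeg m).+1} =>
  X' (fun i => a i) * Y' (fun i => m i - a i)%N)); last first.
  by move=> a /mdeg_inner [/low_eq [-> _] /low_eq [_ ->]].
by rewrite !mul1r !mulr1; ring.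
Qed.

Lemma mult_trivS (P Q : set V) (F : V -> ps R n) :
  (P `<=` Q)%classic -> mult_triv Q F -> mult_triv P F.
Proof.
move=> PQ [Fper F0 FD].
by split=> [v z /PQ|v /PQ|v w /PQ Qv /PQ]; [exact: Fper|exact: F0|exact: FD].
Qed.

Lemma delta_mzero z : Defs.delta R z mz = 1.
Proof.
by rewrite /Defs.delta big1 // => i _; rewrite expr0 fact0 invr1 mulr1.
Qed.

Lemma tors_pre0 : tors_pre (0 : V).
Proof.
exists 1%N, 0; split => //.
by rewrite scaler0; apply/matrixP => i j; rewrite !mxE.
Qed.

Lemma tors_preZ (v : V) k : tors_pre v -> tors_pre (k%:R *: v).
Proof.
move=> [l [z [l_gt0 lv]]]; exists l, (k%:Z *: z); split => //.
rewrite scalerA mulrC -scalerA lv; apply/matrixP => i j.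
by rewrite !mxE intrM.
Qed.

Lemma additive_periodic_tors_eq0 (D : V -> R[i]) :
  (forall u w, tors_pre u -> tors_pre w -> D (u + w) = D u + D w) ->
  (forall u z, tors_pre u -> D (u + latv R z) = D u) ->
  forall v, tors_pre v -> D v = 0.
Proof.
move=> DD Dper v tv; have [k [z [k_gt0 kv]]] := tv.
have D0 : D 0 = 0.
  by apply: (addIr (D 0)); rewrite add0r -DD ?addr0 //; apply: tors_pre0.
have DZ i : D (i%:R *: v) = i%:R * D v.
  elim: i => [|i IHi]; first by rewrite scale0r D0 mul0r.
  rewrite -!natr1 scalerDl scale1r DD ?IHi ?mulrDl ?mul1r //.
  exact: tors_preZ.
have := DZ k; rewrite kv -[latv R z]add0r Dper ?D0 //; last exact: tors_pre0.
by move/esym/eqP; rewrite mulf_eq0 pnatr_eq0 eqn0Ngt k_gt0 => /eqP.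
Qed.

Lemma mult_triv_tors_unique (G F : V -> ps R n) :
  mult_triv (@tors_pre R n) G -> mult_triv (@tors_pre R n) F ->
  forall v, tors_pre v -> G v = F v.
Proof.
move=> [Gper G0 GD] [Fper F0 FD].
suff coefE d m : (mdeg m < d)%N -> forall v, tors_pre v -> G v m = F v m.
  by move=> v tv; apply: funext => m; exact: coefE (ltnSn _) v tv.
elim: d m => // d IHd m le_md; have [m0|m_gt0] := posnP (mdeg m).
  have -> : m = mz by apply: funext; exact: mdeg_eq0.
  by move=> v tv; rewrite G0 ?F0.
have low_eq a : (mdeg a < mdeg m)%N -> forall w, tors_pre w -> G w a = F w a.
  by move=> lt_am; apply: IHd; exact: leq_trans lt_am le_md.
move=> v tv; apply/eqP; rewrite -subr_eq0; apply/eqP; move: v tv.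
apply: (additive_periodic_tors_eq0 (D := fun v => G v m - F v m)).
  move=> u w tu tw; rewrite GD // FD //.
  by apply: psmulB; rewrite ?G0 ?F0 // => a /low_eq eq_a; split; exact: eq_a.
move=> u z tu.
rewrite Gper // Fper // psmulB ?delta_mzero ?G0 ?F0 ?subrr ?add0r //.
by move=> a /low_eq eq_a; split; last exact: eq_a.
Qed.

Lemma closure_eq0 (T : topologicalType) (S : set T) (h : T -> R) :
  continuous h -> (forall x, S x -> h x = 0) -> forall x, closure S x -> h x = 0.
Proof.
move=> hc hS; have /closure_id zeroE : closed (h @^-1` [set 0]).
  by move: hc => /continuous_closedP; apply; exact: closed_eq.
suff : (closure S `<=` closure (h @^-1` [set 0]))%classic.
  by rewrite -zeroE => sub x /sub.
by apply: closureS => x /hS.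
Qed.

Lemma tors_pre_closure (v : V) : closure (@tors_pre R n) v.
Proof.
move=> B /nbhs_ballP [e e_gt0 eB].
pose k := (Num.truncn e^-1).+1.
have k_gt0 : 0 < k%:R :> R by rewrite ltr0n.
have ke : e^-1 < k%:R := truncnS_gt e^-1.
pose z : 'rV[int]_n := \row_j Num.floor (k%:R * v 0 j).
exists (k%:R^-1 *: latv R z); split.
  by exists k, z; split => //; rewrite scalerA mulfV ?gt_eqF // scale1r.
apply: eB; split => // i j; rewrite /ball /= !mxE (ord1 i).
have /andP [le_f] := floor_itv (k%:R * v 0 j).
rewrite intrD; set f := (Num.floor _)%:~R => lt_f.
have -> : v 0 j - k%:R^-1 * f = k%:R^-1 * (k%:R * v 0 j - f).
  by rewrite mulrBr mulrA mulVf ?gt_eqF // mul1r.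
rewrite normrM gtr0_norm ?invr_gt0 // ger0_norm ?subr_ge0 //.
rewrite -(ltr_pM2l k_gt0) mulrA mulfV ?gt_eqF // mul1r.
apply: (@lt_le_trans _ _ 1); first by rewrite ltrBlDl.
by rewrite -[leLHS](mulVf (lt0r_neq0 e_gt0)) ler_pM2r // ltW.
Qed.

Lemma cont_triv_eq_on_tors (G F : V -> ps R n) :
  cont_triv G -> cont_triv F -> (forall v, tors_pre v -> G v = F v) -> G = F.
Proof.
move=> cG cF GF; apply: funext => v; apply: funext => m.
have eq_on_tors (p : R[i] -> R) : continuous (fun w => p (G w m)) ->
    continuous (fun w => p (F w m)) -> p (G v m) = p (F v m).
  move=> cGm cFm; apply/eqP; rewrite -subr_eq0; apply/eqP.
  apply: (closure_eq0 (h := fun w => p (G w m) - p (F w m)) _ _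
                      (@tors_pre_closure v)).
    by move=> w; exact: continuousB (cGm w) (cFm w).
  by move=> w /GF ->; rewrite subrr.
have [[cG_re cG_im] [cF_re cF_im]] := (cG m, cF m).
apply/eqP; rewrite eq_complex.
by rewrite (eq_on_tors (@complex.Re R)) // (eq_on_tors (@complex.Im R)) // !eqxx.
Qed.

End ContinuousTrivialization.

Theorem mainTheorem13 (R : realType) (n : nat) :
  exists F : 'rV[R]_n -> ps R n,
    [/\ (* continuous multiplicative trivialization on T ... *)
        mult_triv setT F /\ cont_triv F,
        (* ... and it is the unique one *)
        (forall G : 'rV[R]_n -> ps R n,
            mult_triv setT G -> cont_triv G -> G = F),
        (* C^infinity *)
        smooth_triv F &
        (* compatible with multiplication by N *)
        (forall (N : nat) (v : 'rV[R]_n), (0 < N)%N ->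
            F (N%:R *: v) = mulN N (F v))] /\
    [/\ (* nabla rho = - kappa rho *)
        nabla_eq F &
        (* restriction to T^tors is rho_can, the (unique) multiplicative
           trivialization over T^tors *)
        forall G : 'rV[R]_n -> ps R n,
          mult_triv (@tors_pre R n) G ->
          forall v, tors_pre v -> G v = F v].
Proof.
have rho_tors := mult_trivS (subsetT (@tors_pre R n)) (@rho_mult_triv R n).
exists (@rho R n); split; split.
- by split; [exact: rho_mult_triv | exact: rho_continuous].
- move=> G /(mult_trivS (subsetT (@tors_pre R n))) G_tors cG.
  apply: cont_triv_eq_on_tors cG (@rho_continuous R n) _.
  exact: mult_triv_tors_unique G_tors rho_tors.
- exact: rho_smooth.
- by move=> N v _; exact: rho_mulN.
- exact: rho_nabla.
- by move=> G G_tors; exact: mult_triv_tors_unique G_tors rho_tors.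
Qed.
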